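(* Let $K, L, N, Z$ be positive integers with $Z \ge 2$. Let $\Omega \subseteq \{0,1,\dots,N-1\}$ be arbitrary. Let $\{\mathbf{a}_i\}_{i=1}^K$ be a $(K,L,Z)$ zero-correlation zone (ZCZ) sequence set, where $\mathbf{a}_i=[a^i_0,\dots,a^i_{L-1}]^{\mathrm T}$ and every entry satisfies $|a^i_l|=1$. For $1\le i\le K$ let $\mathbf{B}_i=[B^i_0,\dots,B^i_{N-1}]^{\mathrm T}\in\mathbb{C}^N$ be arbitrary with $B^i_k=0$ for all $k\in\Omega$, let $\mathbf{b}_i=\mathcal{F}_N^{\mathrm H}\mathbf{B}_i$, and define the length-$NL$ sequence $\mathbf{c}_i=\mathbf{a}_i\otimes\mathbf{b}_i$, i.e. the $(lN+n)$-th entry of $\mathbf{c}_i$ is $a^i_l\, b^i_n$ for $0\le l\le L-1$, $0\le n\le N-1$. Then: (1) for all $i\neq j$, $R_{\mathbf{c}_i,\mathbf{c}_j}(\tau)=0$ for all integers $\tau$ with $|\tau|<NZ-N$ (so $\{\mathbf{c}_i\}$ is a $(K,NL,NZ-N)$ quasi-ZCZ sequence set); (2) each $\mathbf{c}_i$ satisfies the spectrum hole constraint $\Omega$, in the sense that for each $0\le l\le L-1$ the $l$-th block $[c^i_{lN},\dots,c^i_{lN+N-1}]^{\mathrm T}=a^i_l\,\mathbf{b}_i$ has $N$-point DFT $a^i_l\mathbf{B}_i$, which vanishes at every position $k\in\Omega$; (3) for each $i$, $$R_{\mathbf{c}_i}(\tau)=\begin{cases} L\cdot C_{\mathbf{b}_i}(\tau),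 & |\tau|<N,\\ 0, & N\le|\tau|<NZ-N.\end{cases}$$
   Context: For length-$M$ complex sequences $\mathbf{x}=[x_0,\dots,x_{M-1}]^{\mathrm T}$, $\mathbf{y}=[y_0,\dots,y_{M-1}]^{\mathrm T}$, the periodic cross-correlation is $R_{\mathbf{x},\mathbf{y}}(\tau)=\sum_{n=0}^{M-1}x_n y^*_{n+\tau}$, with the index $n+\tau$ taken modulo $M$ (defined for all integers $\tau$); $R_{\mathbf{x}}(\tau):=R_{\mathbf{x},\mathbf{x}}(\tau)$. The aperiodic cross-correlation is $C_{\mathbf{x},\mathbf{y}}(\tau)=\sum_{n} x_n y^*_{n+\tau}$, the sum over those $n$ with $0\le n\le M-1$ and $0\le n+\tau\le M-1$ (so for $0\le\tau\le M-1$ it is $\sum_{n=0}^{M-1-\tau}x_ny^*_{n+\tau}$, and for negative $\tau$ it is $\sum_{n=-\tau}^{M-1}x_ny^*_{n+\tau}$); $C_{\mathbf{x}}(\tau):=C_{\mathbf{x},\mathbf{x}}(\tau)$. A set $\{\mathbf{a}_i\}_{i=1}^K$ of length-$L$ sequences is a $(K,L,Z)$ ZCZ sequence set if $R_{\mathbf{a}_i}(\tau)=0$ for all $i$ and all $1\le|\tau|<Z$, and $R_{\mathbf{a}_i,\mathbf{a}_j}(\tau)=0$ for all $i\ne j$ and all $0\le|\tau|<Z$; a set satisfying only the second (cross-correlation) condition is called a $(K,L,Z)$ quasi-ZCZ set. $\mathcal{F}_N=[f_{p,q}]_{p,q=0}^{N-1}$ with $f_{p,q}=\frac{1}{\sqrt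 N}e^{-2\pi\sqrt{-1}\,pq/N}$ is the unitary DFT matrix, and $\mathcal{F}_N^{\mathrm H}$ its conjugate transpose (the IDFT). $\Omega$ is the set of unavailable subcarrier positions (''spectrum hole constraint''). *)

From HB Require Import structures.
From mathcomp Require Import all_boot all_order all_algebra.
From mathcomp Require Import reals trigo.
From mathcomp.real_closed Require Import complex.
Set Implicit Arguments. Unset Strict Implicit. Unset Printing Implicit Defensive.
Import Order.TTheory GRing.Theory Num.Theory.
Local Open Scope ring_scope.
Local Open Scope complex_scope.

Section Defs.
Variable R : realType.
Local Notation C := R[i].

(* A length-M sequence is a function nat -> C; only indices 0..M-1 matter. *)

Definition percorr (M : nat) (x y : nat -> C) (tau : int) : C :=
  \sum_(n < M) x n * (y (absz ((n%:Z + tau) %% M%:Z)%Z))^*.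

Definition apercorr (M : nat) (x y : nat -> C) (tau : int) : C :=
  \sum_(n < M | (0 <= n%:Z + tau) && (n%:Z + tau < M%:Z))
     x n * (y (absz (n%:Z + tau)))^*.

Definition ZCZ_set (K L Z : nat) (a : 'I_K -> nat -> C) : Prop :=
  (forall i (tau : int), (1 <= absz tau)%N -> (absz tau < Z)%N ->
      percorr L (a i) (a i) tau = 0) /\
  (forall i j (tau : int), i != j -> (absz tau < Z)%N ->
      percorr L (a i) (a j) tau = 0).

Definition quasi_ZCZ_set (K L Z : nat) (a : 'I_K -> nat -> C) : Prop :=
  forall i j (tau : int), i != j -> (absz tau < Z)%N ->
      percorr L (a i) (a j) tau = 0.

Definition expi (t : R) : C := (cos t) +i* (sin t).

Definition dftmx (N p q : nat) : C :=
  ((Num.sqrt (N%:R : R))%:C)^-1 *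
  expi (- (2 * pi * (p * q)%:R / N%:R)).

Definition dft (N : nat) (x : nat -> C) (p : nat) : C :=
  \sum_(q < N) dftmx N p q * x q.

(* IDFT: (F_N^H X)_p, entry (p,q) of F_N^H is conj(f_{q,p}) *)
Definition idft (N : nat) (X : nat -> C) (p : nat) : C :=
  \sum_(q < N) (dftmx N q p)^* * X q.

Definition kron (N : nat) (a b : nat -> C) (m : nat) : C :=
  a (m %/ N)%N * b (m %% N)%N.

End Defs.

From HB Require Import structures.
From mathcomp Require Import all_boot all_order all_algebra.
From mathcomp Require Import reals trigo.
From mathcomp.real_closed Require Import complex.
From mathcomp Require Import zify ring lra.

(* Write tau = q N + r with 0 <= r < N.  A cyclic shift by tau of the Kronecker
   product a (x) b sends block l, offset n to block l + q, offset n + r when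
   n + r < N, and to block l + q + 1, offset n + r - N otherwise, so
     R_{a(x)b, a'(x)b'}(tau) = R_{a,a'}(q) C_{b,b'}(r) + R_{a,a'}(q+1) C_{b,b'}(r - N).
   For |tau| < N Z - N both |q| and |q + 1| are below Z, hence the zero
   correlation zone of the a_i kills every term except R_{a_i}(0) = L (the
   entries are unimodular), which only occurs for |tau| < N.  The spectral
   claim is F_N F_N^H = I, i.e. the orthogonality of the rows of the DFT
   matrix, a vanishing geometric sum of N-th roots of unity. *)
Set Implicit Arguments. Unset Strict Implicit. Unset Printing Implicit Defensive.
Import Order.TTheory GRing.Theory Num.Theory.
Local Open Scope complex_scope.
Local Open Scope ring_scope.

Lemma sum_expr_eq0 (F : idomainType) (z : F) (n : nat) :
  z != 1 -> z ^+ n = 1 -> \sum_(i < n) z ^+ i = 0.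
Proof.
move=> z_neq1 zn1; apply/eqP.
by have /eqP := subrX1 z n; rewrite zn1 subrr eq_sym mulf_eq0 subr_eq0 (negbTE z_neq1).
Qed.

Section Expi.
Variable R : realType.
Local Notation C := R[i].

Lemma expi0 : expi 0 = 1 :> C.
Proof. by rewrite /expi cos0 sin0. Qed.

Lemma expiD (x y : R) : expi (x + y) = expi x * expi y :> C.
Proof. by rewrite /expi cosD sinD; congr (_ +i* _); ring. Qed.

Lemma expi_conj (x : R) : (expi x)^* = expi (- x) :> C.
Proof. by rewrite /expi cosN sinN. Qed.

Lemma expiMn (x : R) (n : nat) : expi (x *+ n) = expi x ^+ n :> C.
Proof. by elim: n => [|n IHn]; rewrite ?expi0 // mulrS expiD IHn exprS. Qed.

Lemma expi_2pi_root (N d : nat) : (0 < N)%N ->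
  expi (2 * pi * d%:R / N%:R) ^+ N = 1 :> C.
Proof.
move=> N_gt0; rewrite -expiMn -[_ *+ N]mulr_natr divfK ?pnatr_eq0 -?lt0n //.
by rewrite mulr_natr expiMn mulr_natl /expi cos2pi sin2pi expr1n.
Qed.

Lemma expi_2pi_root_neq1 (N d : nat) : (0 < d < N)%N ->
  expi (2 * pi * d%:R / N%:R) != 1 :> C.
Proof.
case/andP=> d_gt0 dN; apply/eqP => /(congr1 (@complex.Re R)) /=.
set h : R := pi * d%:R / N%:R.
have -> : 2 * pi * d%:R / N%:R = h *+ 2 by rewrite /h -mulr_natl; ring.
have h_gt0 : 0 < h < pi.
  have N_gt0 : (0 : R) < N%:R by rewrite ltr0n (ltn_trans d_gt0).
  rewrite /h ltr_pdivrMr // ltr_pM2l ?pi_gt0 ?ltr_nat // dN andbT.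
  by rewrite mulr_gt0 ?invr_gt0 // mulr_gt0 ?pi_gt0 // ltr0n.
move=> cos2h1; rewrite cos_mulr2n in cos2h1.
have : sin h ^+ 2 = 0 by rewrite sin2cos2; move: cos2h1; rewrite mulr2n; lra.
by move/eqP; rewrite expf_eq0 /= => /eqP sin0; move: (sin_gt0_pi h_gt0); rewrite sin0 ltxx.
Qed.

Lemma sum_expi_2pi_root (N d : nat) : (0 < d < N)%N ->
  \sum_(q < N) expi (2 * pi * d%:R / N%:R) ^+ q = 0 :> C.
Proof.
move=> dN; apply: sum_expr_eq0; first exact: expi_2pi_root_neq1.
by apply: expi_2pi_root; case/andP: dN => d0 dN; apply: leq_ltn_trans dN.
Qed.

End Expi.

Section DFT.
Variable R : realType.
Local Notation C := R[i].

Lemma conjC_sqrtV (x : R) :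
  (((Num.sqrt x)%:C)^-1)^* = ((Num.sqrt x)%:C)^-1 :> C.
Proof. by rewrite fmorphV; congr (_^-1); apply: geC0_conj; rewrite ler0c sqrtr_ge0. Qed.

Lemma dftmx_mulJ (N k p q : nat) : (0 < N)%N -> (k <= p)%N ->
  dftmx R N k q * (dftmx R N p q)^* =
  N%:R^-1 * expi (2 * pi * (p - k)%:R / N%:R) ^+ q.
Proof.
move=> N_gt0 kp; have N_neq0 : (N%:R : R) != 0 by rewrite pnatr_eq0 -lt0n.
have sqrtNV2 : ((Num.sqrt (N%:R : R))%:C)^-1 * ((Num.sqrt (N%:R : R))%:C)^-1
    = N%:R^-1 :> C.
  by rewrite -invfM -rmorphM -expr2 sqr_sqrtr ?ler0n // rmorph_nat.
rewrite /dftmx [(_ * _)^*]rmorphM /= conjC_sqrtV expi_conj opprK mulrACA sqrtNV2.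
rewrite -expiD -expiMn; congr (_ * expi _).
by rewrite -mulr_natr !natrM natrB //; field.
Qed.

Lemma dftmx_orthonormal (N k p : nat) : (k < N)%N -> (p < N)%N ->
  \sum_(q < N) dftmx R N k q * (dftmx R N p q)^* = (k == p)%:R :> C.
Proof.
move=> kN pN; wlog kp : k p kN pN / (k <= p)%N => [wlog_kp|].
  have [kp|pk] := leqP k p; first exact: wlog_kp.
  rewrite eq_sym -conjC_nat -wlog_kp ?(ltnW pk) // rmorph_sum.
  by apply: eq_bigr => q _; rewrite [RHS]rmorphM /= conjCK mulrC.
have N_gt0 : (0 < N)%N by apply: leq_ltn_trans kN.
under eq_bigr do rewrite dftmx_mulJ //.
rewrite -mulr_sumr; move: kp; rewrite leq_eqVlt => /orP [/eqP <-|kp].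
  rewrite subnn mulr0 mul0r expi0 eqxx.
  under eq_bigr do rewrite expr1n.
  by rewrite sumr_const card_ord mulVf // pnatr_eq0 -lt0n.
by rewrite sum_expi_2pi_root ?mulr0 ?(ltn_eqF kp) // subn_gt0 kp /=; lia.
Qed.

Lemma dft_idft (N : nat) (X : nat -> C) (k : nat) : (k < N)%N ->
  dft N (idft N X) k = X k.
Proof.
move=> kN; rewrite /dft /idft.
under eq_bigr do rewrite mulr_sumr.
rewrite exchange_big /=.
transitivity (\sum_(p < N) (k == p)%:R * X p).
  apply: eq_bigr => p _; rewrite -(dftmx_orthonormal kN (ltn_ord p)) mulr_suml.
  by apply: eq_bigr => q _; rewrite mulrA.
rewrite (bigD1 (Ordinal kN)) //= eqxx mul1r big1 ?addr0 // => p p_neq_k.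
by rewrite (_ : k == p = false) ?mul0r //; apply: contraNF p_neq_k => /eqP kp; apply/eqP/val_inj.
Qed.

Lemma dftZ (N : nat) (s : C) (x : nat -> C) (k : nat) :
  dft N (fun n => s * x n) k = s * dft N x k.
Proof. by rewrite /dft mulr_sumr; apply: eq_bigr => q _; rewrite mulrCA. Qed.

End DFT.

Lemma big_ord_mul_blocks (V : nmodType) (N L : nat) (F : nat -> V) :
  \sum_(m < N * L) F m = \sum_(l < L) \sum_(n < N) F (l * N + n)%N.
Proof.
elim: L => [|L IHL]; first by rewrite muln0 !big_ord0.
rewrite big_ord_recr -IHL mulnS addnC big_split_ord /=.
by congr (_ + _); apply: eq_bigr => n _; rewrite mulnC addnC.
Qed.

Lemma absz_modz_block (N L : nat) (t : int) (e : nat) : (0 < L)%N -> (e < N)%N ->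
  absz ((t * N%:Z + e%:Z) %% (N * L)%:Z)%Z = (absz (t %% L%:Z)%Z * N + e)%N.
Proof.
move=> L_gt0 eN.
have [tL_ge0 tL_lt] : 0 <= (t %% L%:Z)%Z /\ (t %% L%:Z)%Z < L%:Z by split; lia.
rewrite {1}(divz_eq t L%:Z) mulrDl -mulrA -PoszM mulnC -addrA modzMDl modz_small; first lia.
by apply/andP; split; nia.
Qed.

Section Correlation.
Variable R : realType.
Local Notation C := R[i].

Lemma kron_block (N : nat) (x u : nat -> C) (l n : nat) : (n < N)%N ->
  kron N x u (l * N + n) = x l * u n.
Proof.
move=> nN; have N_gt0 : (0 < N)%N by apply: leq_ltn_trans nN.
by rewrite /kron divnMDl // divn_small // addn0 modnMDl modn_small.
Qed.

Lemma kron_mulJ_shift (N L : nat) (x u y w : nat -> C) (tau t : int) (l n e : nat) :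
  (0 < L)%N -> (n < N)%N -> (e < N)%N ->
  (l * N + n)%N%:Z + tau = t * N%:Z + e%:Z ->
  kron N x u (l * N + n) * (kron N y w (absz (((l * N + n)%N%:Z + tau) %% (N * L)%:Z)%Z))^*
  = (x l * (y (absz (t %% L%:Z)%Z))^*) * (u n * (w e)^*).
Proof.
move=> L_gt0 nN eN ->.
by rewrite absz_modz_block // !kron_block // rmorphM mulrACA.
Qed.

Lemma apercorr_natE (N : nat) (x y : nat -> C) (s : nat) :
  apercorr N x y s = \sum_(n < N | (n + s < N)%N) x n * (y (n + s)%N)^*.
Proof. by apply: eq_big => [n|n _]; rewrite -PoszD //=; lia. Qed.

Lemma apercorr_subNE (N : nat) (x y : nat -> C) (s : nat) : (s <= N)%N ->
  apercorr N x y (s%:Z - N%:Z) = \sum_(n < N | (N <= n + s)%N) x n * (y (n + s - N)%N)^*.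
Proof.
move=> sN; apply: eq_big => [n|n]; first by have := ltn_ord n; lia.
by move=> Nns; congr (_ * (y _)^*); lia.
Qed.

Lemma apercorr_eq0 (N : nat) (x y : nat -> C) (tau : int) : (N <= absz tau)%N ->
  apercorr N x y tau = 0.
Proof. by move=> Ntau; rewrite /apercorr big_pred0 // => n; have := ltn_ord n; lia. Qed.

Lemma percorr_kron (N L : nat) (x u y w : nat -> C) (q : int) (r : nat) (tau : int) :
  (0 < L)%N -> (r < N)%N -> tau = q * N%:Z + r%:Z ->
  percorr (N * L) (kron N x u) (kron N y w) tau =
  percorr L x y q * apercorr N u w r
  + percorr L x y (q + 1) * apercorr N u w (r%:Z - N%:Z).
Proof.
move=> L_gt0 rN tauE.
rewrite (apercorr_natE N u w r) (apercorr_subNE u w (ltnW rN)).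
rewrite /percorr (big_ord_mul_blocks N L
  (fun m => kron N x u m * (kron N y w (absz ((m%:Z + tau) %% (N * L)%:Z)%Z))^*)).
rewrite mulr_suml [X in _ + X]mulr_suml -big_split /=; apply: eq_bigr => l _.
rewrite (bigID (fun n : 'I_N => n + r < N)%N) /= 2!mulr_sumr.
congr (_ + _).
  apply: eq_big => // n nr.
  by apply: kron_mulJ_shift => //; rewrite tauE !PoszD PoszM; ring.
apply: eq_big => [n|n nr]; first by rewrite -leqNgt.
have nrN : (n + r - N < N)%N by have := ltn_ord n; lia.
apply: kron_mulJ_shift => //; rewrite tauE -subzn; last by rewrite leqNgt.
by rewrite !PoszD PoszM; ring.
Qed.

Lemma percorr_kron_divz (N L : nat) (x u y w : nat -> C) (tau : int) :
  (0 < N)%N -> (0 < L)%N ->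
  percorr (N * L) (kron N x u) (kron N y w) tau =
  percorr L x y (tau %/ N%:Z)%Z * apercorr N u w (tau %% N%:Z)%Z
  + percorr L x y ((tau %/ N%:Z)%Z + 1) * apercorr N u w ((tau %% N%:Z)%Z - N%:Z).
Proof.
move=> N_gt0 L_gt0.
have -> : (tau %% N%:Z)%Z = (absz (tau %% N%:Z)%Z)%:Z by rewrite abszE ger0_norm ?modz_ge0 //; lia.
by apply: percorr_kron => //; [lia | rewrite abszE ger0_norm ?modz_ge0 -?divz_eq //; lia].
Qed.

Lemma percorr0_unimodular (L : nat) (x : nat -> C) :
  (forall l, (l < L)%N -> `|x l| = 1) -> percorr L x x 0 = L%:R.
Proof.
move=> x_unimod; rewrite /percorr (eq_bigr (fun _ => 1)) ?sumr_const ?card_ord // => l _.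
by rewrite addr0 modz_small /= -?normCK ?x_unimod ?expr1n //; have := ltn_ord l; lia.
Qed.

End Correlation.

Lemma absz_divz_lt (N Z : nat) (tau : int) : (0 < N)%N -> (absz tau < N * Z - N)%N ->
  (absz (tau %/ N%:Z)%Z < Z)%N /\ (absz ((tau %/ N%:Z)%Z + 1)%R < Z)%N.
Proof. by move=> N_gt0 tauZ; split; nia. Qed.

Theorem theorem1 (R : realType) (K L N Z : nat)
  (Omega : pred nat) (a : 'I_K -> nat -> R[i]) (B : 'I_K -> nat -> R[i]) :
  (0 < K)%N -> (0 < L)%N -> (0 < N)%N -> (2 <= Z)%N ->
  (forall k, Omega k -> (k < N)%N) ->
  ZCZ_set L Z a ->
  (forall i (l : nat), (l < L)%N -> `|a i l| = 1) ->
  (forall i (k : nat), Omega k -> B i k = 0) ->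
  let b := fun i => idft N (B i) in
  let c := fun i => kron N (a i) (b i) in
  (* (1) *)
  (forall i j (tau : int), i != j -> (absz tau < N * Z - N)%N ->
      percorr (N * L) (c i) (c j) tau = 0)
  /\ quasi_ZCZ_set (N * L) (N * Z - N) c
  (* (2) *)
  /\ (forall i (l : nat), (l < L)%N ->
        (forall k : nat, (k < N)%N ->
           dft N (fun n => c i (l * N + n)%N) k = a i l * B i k)
        /\ (forall k : nat, Omega k ->
           dft N (fun n => c i (l * N + n)%N) k = 0))
  (* (3) *)
  /\ (forall i (tau : int),
        ((absz tau < N)%N ->
           percorr (N * L) (c i) (c i) tau = L%:R * apercorr N (b i) (b i) tau)
        /\ ((N <= absz tau)%N -> (absz tau < N * Z - N)%N ->
           percorr (N * L) (c i) (c i) tau = 0)).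
Proof.
move=> _ L_gt0 N_gt0 Z_ge2 Omega_lt [zcz_auto zcz_cross] a_unimod B_Omega b c.
have cross_zero i j (tau : int) : i != j -> (absz tau < N * Z - N)%N ->
    percorr (N * L) (c i) (c j) tau = 0.
  move=> ij tauZ; have [q_lt q1_lt] := absz_divz_lt N_gt0 tauZ.
  by rewrite percorr_kron_divz // !zcz_cross // !mul0r addr0.
have block_dft i l k : (k < N)%N -> dft N (fun n => c i (l * N + n)%N) k = a i l * B i k.
  move=> kN; rewrite -(dft_idft (B i) kN) -dftZ.
  by apply: eq_bigr => n _; rewrite /c kron_block.
split; [exact: cross_zero | split; [exact: cross_zero | split]].
  move=> i l _; split=> [k|k kOmega]; first exact: block_dft.
  by rewrite block_dft ?B_Omega ?mulr0 ?Omega_lt.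
move=> i tau; have auto_zero := zcz_auto i.
have auto0 := percorr0_unimodular (a_unimod i).
split=> [tauN|Ntau tauZ].
  have [tau_ge0|tau_lt0] := lerP 0 tau.
  - rewrite (@percorr_kron _ _ _ _ _ _ _ 0 (absz tau)) //; last first.
      by rewrite mul0r add0r abszE ger0_norm.
    by rewrite add0r auto0 auto_zero // mul0r addr0 abszE ger0_norm.
  - have rN : (N - absz tau < N)%N by lia.
    rewrite (@percorr_kron _ _ _ _ _ _ _ (-1) (N - absz tau)) //; last by lia.
    by rewrite addNr auto0 auto_zero // mul0r add0r; congr (_ * apercorr _ _ _ _); lia.
have [q_lt q1_lt] := absz_divz_lt N_gt0 tauZ.
rewrite percorr_kron_divz // auto_zero // ?mul0r ?add0r; last by nia.
have [q1_0|q1_neq0] := eqVneq ((tau %/ N%:Z)%Z + 1) 0.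
  by rewrite apercorr_eq0 ?mulr0 //; nia.
by rewrite auto_zero ?mul0r //; lia.
Qed.
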